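(* Let $X$ be a real-valued random variable and let $f,g:\mathbb{R}\to\mathbb{R}^+$ be bounded increasing functions. Then $$\operatorname{Cov}[f(X)g(X),\,g(X)]\;\geq\;\mathbb{E}[f(X)]\,\operatorname{Var}[g(X)].$$ *)

From HB Require Import structures.
From mathcomp Require Import all_boot all_order all_algebra.
From mathcomp Require Import all_classical all_reals all_analysis.

From HB Require Import structures.
From mathcomp Require Import all_boot all_order all_algebra.
From mathcomp Require Import all_classical all_reals all_analysis.
From mathcomp Require Import measurable_realfun ring.
Import Order.TTheory GRing.Theory Num.Theory.
Local Open Scope ring_scope.
Local Open Scope classical_set_scope.

(* Write F = f(X), G = g(X), m = Var G and B = G (G - E G) - m, so that
   E B = 0 and Cov(F G, G) - E F Var G = E[F B].  Since g >= 0 is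
   nondecreasing, b(x) = g x (g x - E G) - m changes sign at most once, from
   nonpositive to positive; taking c = inf {f x | b x > 0}, the monotonicity
   of f gives (f x - c) b x >= 0 everywhere.  Hence
   E[F B] = E[(F - c) B] >= 0. *)

Lemma single_crossing_cut (disp : Order.disp_t) (D : orderType disp)
    (R : realType) (a b : D -> R) :
  {homo a : x y / (x <= y)%O >-> x <= y} ->
  (exists M : R, forall x, `|a x| <= M) ->
  (forall x y, (x <= y)%O -> 0 < b x -> 0 < b y) ->
  exists c, forall x, 0 <= (a x - c) * b x.
Proof.
move=> a_incr [M aM] b_cross.
have [[y0 by0]|b_le0] := pselect (exists y, 0 < b y); last first.
  exists M => x; rewrite mulr_le0 //.
    by rewrite subr_le0 (le_trans (ler_norm _)).
  by rewrite leNgt; apply/negP => bx; apply: b_le0; exists x.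
set S := [set a y | y in [set y | 0 < b y]].
have S_lb : has_lbound S.
  exists (- M) => _ [y _ <-].
  by rewrite lerNl (le_trans _ (aM y)) // -normrN ler_norm.
have S_ne : nonempty S by exists (a y0), y0.
exists (inf S) => x; have [bx|bx] := ltP 0 (b x).
  by apply: mulr_ge0 (ltW bx); rewrite subr_ge0 ge_inf //; exists x.
rewrite mulr_le0 // subr_le0; apply: lb_le_inf => // _ [y /= by_pos <-].
apply: a_incr; rewrite leNgt; apply/negP => yx.
by move: bx; rewrite leNgt (b_cross y x (ltW yx) by_pos).
Qed.

Lemma quadratic_crossing (R : realFieldType) (c m s t : R) :
  0 <= m -> 0 <= s -> s <= t -> m < s * (s - c) -> m < t * (t - c).
Proof.
move=> m0 s0 st ms.
have sc : 0 < s - c.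
  rewrite ltNge; apply/negP => cs.
  by move: ms; rewrite ltNge (le_trans _ m0) // mulr_ge0_le0.
apply: (lt_le_trans ms); apply: ler_pM => //; first exact: ltW.
by rewrite lerB.
Qed.

Section bounded_measurable.
Context {d} {T : measurableType d} {R : realType} (P : probability T R).

Definition bounded_measurable (h : T -> R) :=
  measurable_fun setT h /\ exists M : R, forall x, `|h x| <= M.

Lemma bounded_measurable_Lfun1 {h} : bounded_measurable h -> h \in Lfun P 1.
Proof.
move=> [mh [M hM]]; apply/Lfun1_integrable.
apply: measurable_bounded_integrable => //.
  by rewrite ltey_eq fin_num_measure.
exists M; split; first by rewrite num_real.
by move=> y My x _ /=; apply: le_trans (hM x) (ltW My).
Qed.

Lemma bounded_measurable_cst c : bounded_measurable (cst c).
Proof. by split; [exact: measurable_cst | exists `|c|]. Qed.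

Lemma bounded_measurableB {h1 h2} :
  bounded_measurable h1 -> bounded_measurable h2 ->
  bounded_measurable (h1 \- h2).
Proof.
move=> [m1 [M1 H1]] [m2 [M2 H2]]; split; first exact: measurable_funB.
by exists (M1 + M2) => x; rewrite (le_trans (ler_normB _ _)) ?lerD.
Qed.

Lemma bounded_measurableM {h1 h2} :
  bounded_measurable h1 -> bounded_measurable h2 ->
  bounded_measurable (h1 * h2).
Proof.
move=> [m1 [M1 H1]] [m2 [M2 H2]]; split; first exact: measurable_funM.
by exists (M1 * M2) => x; rewrite normrM ler_pM.
Qed.

Lemma bounded_measurableZ (k : R) {h} : bounded_measurable h ->
  bounded_measurable (k \o* h).
Proof.
move=> [mh [M hM]]; split; first exact: measurable_funM.
by exists (`|k| * M) => x /=; rewrite normrM mulrC ler_wpM2l.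
Qed.

Lemma bounded_measurable_comp {h : R -> R} {Y : T -> R} :
  measurable_fun setT Y -> {homo h : x y / x <= y} ->
  (exists M : R, forall x, `|h x| <= M) -> bounded_measurable (h \o Y).
Proof.
move=> mY h_incr [M hM]; split; last by exists M => x; exact: hM.
exact: measurableT_comp (nondecreasing_measurable measurableT h_incr) mY.
Qed.

#[local] Hint Resolve bounded_measurable_cst bounded_measurableB
  bounded_measurableM bounded_measurableZ : core.

Definition mean (h : T -> R) : R := fine 'E_P[h].

Lemma meanE {h} : bounded_measurable h -> 'E_P[h]%E = (mean h)%:E.
Proof.
by move=> /bounded_measurable_Lfun1 h1; rewrite fineK // expectation_fin_num.
Qed.

Lemma meanB {h1 h2} : bounded_measurable h1 -> bounded_measurable h2 ->
  mean (h1 \- h2) = mean h1 - mean h2.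
Proof.
move=> b1 b2; rewrite /mean expectationB ?bounded_measurable_Lfun1 //.
by rewrite (meanE b1) (meanE b2).
Qed.

Lemma meanZ k {h} : bounded_measurable h -> mean (k \o* h) = k * mean h.
Proof.
by move=> bh; rewrite /mean expectationZl ?bounded_measurable_Lfun1 // (meanE bh).
Qed.

Lemma mean_cst c : mean (cst c) = c.
Proof. by rewrite /mean expectation_cst. Qed.

Lemma mean_ge0 {h} : (forall x, 0 <= h x) -> 0 <= mean h.
Proof. by move=> h0; rewrite /mean fine_ge0 // expectation_ge0. Qed.

Lemma covariance_mean {h1 h2} : bounded_measurable h1 -> bounded_measurable h2 ->
  covariance P h1 h2 = (mean (h1 * h2) - mean h1 * mean h2)%:E.
Proof.
move=> b1 b2; have b12 := bounded_measurableM b1 b2.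
rewrite covarianceE ?bounded_measurable_Lfun1 //.
by rewrite (meanE b1) (meanE b2) (meanE b12).
Qed.

Lemma mean_mul_ge0 {F B} c : bounded_measurable F -> bounded_measurable B ->
  mean B = 0 -> (forall x, 0 <= (F x - c) * B x) -> 0 <= mean (F * B).
Proof.
move=> bF bB B0 FcB0; have := mean_ge0 FcB0.
have -> : (fun x => (F x - c) * B x) = F * B \- c \o* B.
  by apply/funext => x; rewrite mulrfctE /=; ring.
by rewrite meanB ?meanZ ?B0 ?mulr0 ?subr0; auto.
Qed.

Lemma mean_variance_le_covariance {F G} c :
  bounded_measurable F -> bounded_measurable G ->
  (forall x, 0 <= (F x - c) * (G x * (G x - mean G) - fine 'V_P[G])) ->
  ('E_P[F] * 'V_P[G] <= covariance P (F * G) G)%E.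
Proof.
move=> bF bG cut.
have bFG : bounded_measurable (F * G) by auto.
set m := fine 'V_P[G].
have eV : 'V_P[G] = (mean (G * G) - mean G * mean G)%:E by exact: covariance_mean.
have mE : m = mean (G * G) - mean G * mean G by rewrite /m eV.
set B := (G * G \- mean G \o* G) \- cst m.
have bB : bounded_measurable B by rewrite /B; auto.
have B0 : mean B = 0 by rewrite /B !meanB ?meanZ ?mean_cst ?mE ?subrr; auto.
have FB0 : 0 <= mean (F * B).
  apply: (mean_mul_ge0 c bF bB B0) => x.
  suff -> : B x = G x * (G x - mean G) - m by exact: cut.
  by rewrite /B /= mulrfctE /=; ring.
have FBE : F * B = (F * G * G \- mean G \o* (F * G)) \- m \o* F.
  by apply/funext => x; rewrite /B !mulrfctE /=; ring.
rewrite FBE !meanB ?meanZ in FB0; auto.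
rewrite (meanE bF) eV covariance_mean // -EFinM lee_fin -subr_ge0.
by rewrite -mE [mean (F * G) * _]mulrC [mean F * _]mulrC.
Qed.

End bounded_measurable.

Theorem lemma4p14 (d : measure_display) (T : measurableType d) (R : realType)
  (P : probability T R) (X : {RV P >-> R}) (f g : R -> R)
  (f_ge0 : forall x, 0 <= f x) (g_ge0 : forall x, 0 <= g x)
  (f_incr : {homo f : x y / x <= y}) (g_incr : {homo g : x y / x <= y})
  (f_bdd : exists M : R, forall x, `|f x| <= M)
  (g_bdd : exists M : R, forall x, `|g x| <= M) :
  ('E_P[f \o X] * 'V_P[g \o X] <=
     covariance P ((f \o X) * (g \o X)) (g \o X))%E.
Proof.
have mX : measurable_fun setT X := measurable_funPT X.
have bF := bounded_measurable_comp mX f_incr f_bdd.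
have bG := bounded_measurable_comp mX g_incr g_bdd.
set eG := mean P (g \o X); set m := fine 'V_P[g \o X].
have m_ge0 : 0 <= m by rewrite fine_ge0 ?variance_ge0.
have [c cut] : exists c, forall x, 0 <= (f x - c) * (g x * (g x - eG) - m).
  apply: single_crossing_cut => // x y xy; rewrite !subr_gt0.
  exact: quadratic_crossing (g_ge0 x) (g_incr _ _ xy).
by apply: (mean_variance_le_covariance P c bF bG) => w; exact: cut.
Qed.
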